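(* The class of finite linear orders has the Rank Property: for every countable ordinal $\alpha$ there is a countable linear order $X$ with $\mathsf{rk}(X)=\alpha$.
   Context: Let $\mathcal F$ be the class of finite linear orders (language $\{<\}$); countable linear orders are the structures considered; substructures are suborders and $\mathsf{age}(X)$ is the set of finite suborders of $X$. For $A\le B$, $B$ is a prime extension of $A$ if $|B\setminus A|=1$; a realization of $B$ in $X$ (where $A\le X$) is $C\le X$ with $A\le C$ and an order-isomorphism $B\to C$ fixing $A$ pointwise. For $F\in\mathsf{age}(X)$ define by recursion: $\mathsf{rk}_X(F)\ge0$ always; $\mathsf{rk}_X(F)\ge\alpha+1$ iff every prime extension $B\in\mathcal F$ of $F$ has a realization $C$ in $X$ with $\mathsf{rk}_X(C)\ge\alpha$; for limit $\alpha$, $\mathsf{rk}_X(F)\ge\alpha$ iff $\mathsf{rk}_X(F)\ge\beta$ for all $\beta<\alpha$. $\mathsf{rk}_X(F)=\sup\{\alpha:\mathsf{rk}_X(F)\ge\alpha\}$ (or $\infty$ if this holds for all ordinals), and $\mathsf{rk}(X)=\mathsf{rk}_X(\emptyset)$. *)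

From Stdlib Require Import List.
Set Implicit Arguments.

Definition strict_linear (T : Type) (lt : T -> T -> Prop) : Prop :=
  (forall x, ~ lt x x) /\
  (forall x y z, lt x y -> lt y z -> lt x z) /\
  (forall x y, lt x y \/ x = y \/ lt y x).

Definition countable (T : Type) : Prop :=
  exists f : T -> nat, forall x y, f x = f y -> x = y.

Definition finite_type (T : Type) : Prop :=
  exists l : list T, forall x, In x l.

Definition finite_subset (T : Type) (A : T -> Prop) : Prop :=
  exists l : list T, forall x, A x -> In x l.

(* A prime extension B in the class of finite linear orders of the finite
   suborder A of X = (T, lt): a finite linear order B together with an
   embedding of A onto a suborder of B missing exactly one point of B. *)
Record prime_ext (T : Type) (lt : T -> T -> Prop) (A : T -> Prop) := PrimeExt {
  pe_car : Type;
  pe_lt : pe_car -> pe_car -> Prop;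
  pe_emb : {x | A x} -> pe_car;
  pe_linear : strict_linear pe_lt;
  pe_finite : finite_type pe_car;
  pe_emb_order : forall a b : {x | A x},
      pe_lt (pe_emb a) (pe_emb b) <-> lt (proj1_sig a) (proj1_sig b);
  pe_one_new : exists z, (forall a, pe_emb a <> z) /\
                         (forall y, (forall a, pe_emb a <> y) -> y = z)
}.

Definition realizes (T : Type) (lt : T -> T -> Prop) (A : T -> Prop)
    (B : prime_ext lt A) (C : T -> Prop) : Prop :=
  finite_subset C /\ (forall x, A x -> C x) /\
  exists g : pe_car B -> T,
    (forall y, C (g y)) /\
    (forall c, C c -> exists y, g y = c) /\
    (forall y1 y2, g y1 = g y2 -> y1 = y2) /\
    (forall y1 y2, pe_lt B y1 y2 <-> lt (g y1) (g y2)) /\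
    (forall a : {x | A x}, g (pe_emb B a) = proj1_sig a).

(* One step of the recursive definition of "rk_X(F) >= w", for w an element
   of a well-order (O, ltO) (an ordinal).  The first conjunct is the
   successor clause (w = v+1, v the immediate predecessor of w); the second
   is the limit clause (w has predecessors but no largest one).  For w = 0
   (no predecessors) both are vacuous, so rk_X(F) >= 0 always. *)
Definition rk_step (T : Type) (lt : T -> T -> Prop) (O : Type)
    (ltO : O -> O -> Prop) (w : O)
    (rec : forall v, ltO v w -> (T -> Prop) -> Prop) (F : T -> Prop) : Prop :=
  (forall v (h : ltO v w), (forall u, ltO u w -> ~ ltO v u) ->
     forall B : prime_ext lt F, exists C, realizes B C /\ rec v h C)
  /\
  ((forall v, ltO v w -> exists u, ltO v u /\ ltO u w) ->
     forall v (h : ltO v w), rec v h F).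

Definition rkge (T : Type) (lt : T -> T -> Prop) (O : Type)
    (ltO : O -> O -> Prop) (wf : well_founded ltO) : O -> (T -> Prop) -> Prop :=
  Fix wf (fun _ => (T -> Prop) -> Prop) (rk_step lt ltO).

(* Given an ordinal alpha presented as a well-order W, W + bool presents the
   ordinal alpha + 2: inl w are the ordinals < alpha, inr false = alpha,
   inr true = alpha + 1. *)
Definition ext_lt (W : Type) (ltW : W -> W -> Prop) (x y : W + bool) : Prop :=
  match x, y with
  | inl a, inl b => ltW a b
  | inl _, inr _ => True
  | inr false, inr true => True
  | _, _ => False
  end.

Lemma ext_lt_wf (W : Type) (ltW : W -> W -> Prop) :
  well_founded ltW -> well_founded (ext_lt ltW).
Proof.
  intros hW.
  assert (HL : forall a, Acc (ext_lt ltW) (inl a)).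
  { intros a; induction (hW a) as [a _ IH]; constructor.
    intros [b|[|]] hb; simpl in hb; try contradiction; auto. }
  assert (HF : Acc (ext_lt ltW) (inr false)).
  { constructor; intros [b|[|]] hb; simpl in hb; try contradiction; auto. }
  intros [a|[|]]; auto.
  constructor; intros [b|[|]] hb; simpl in hb; try contradiction; auto.
Qed.

(* rk(X) = alpha, where X = (T, lt) and alpha is the order type of (W, ltW):
   for every ordinal gamma <= alpha + 1,  rk_X(empty) >= gamma  iff
   gamma <= alpha (i.e. gamma < alpha + 1). *)
Definition rank_is (T : Type) (lt : T -> T -> Prop) (W : Type)
    (ltW : W -> W -> Prop) (hW : well_founded ltW) : Prop :=
  forall g : W + bool,
    rkge lt (ext_lt_wf hW) g (fun _ => False) <-> ext_lt ltW g (inr true).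

(* The witness for alpha is the set of nonempty strictly decreasing sequences in alpha,
   ordered lexicographically with a sequence before its proper extensions.  Write Y_g
   ([headed_below g]) for the sequences whose first term is below g, so that the whole
   order is Y_alpha.  A prime extension of a finite F is determined by a cut of F, and its
   realizations are the F + y with y in the corresponding gap.  Both bounds go by
   induction on g:
   - if every gap of F contains a copy of Y_g, then rk(F) >= g.  For g = m + 1, put y at
     the image of the sequence (m): the sequences headed below m and the sequences m :: t
     give copies of Y_m on either side of y, and a cut of F + y that moves a point of F
     sees a gap of F, hence a copy of Y_g.
   - if some gap of F embeds into Y_d with d < g, then rk(F) < g.  For g = v + 1, whatever
     point y of that gap is added, one of its two halves embeds into Y_u for some u < v.
   For F empty the only gap is the whole order, namely Y_alpha. *)

From Stdlib Require Import List Classical ClassicalEpsilon FunctionalExtensionality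
  PropExtensionality ProofIrrelevance Cantor Sorted.
Import ListNotations.
Set Implicit Arguments.

Lemma rkge_unfold (T : Type) (lt : T -> T -> Prop) (O : Type) (ltO : O -> O -> Prop)
    (wf : well_founded ltO) (w : O) (F : T -> Prop) :
  rkge lt wf w F <-> rk_step lt ltO w (fun v _ => rkge lt wf v) F.
Proof.
  unfold rkge at 1; rewrite Fix_eq; [reflexivity|].
  intros x f g Hfg; replace f with g; [reflexivity|].
  apply functional_extensionality_dep; intro v.
  apply functional_extensionality_dep; intro h.
  symmetry; apply Hfg.
Qed.

Lemma sig_eq {A : Type} {P : A -> Prop} (x y : {a | P a}) :
  proj1_sig x = proj1_sig y -> x = y.
Proof. apply eq_sig_hprop; intros; apply proof_irrelevance. Qed.

Lemma strict_mono_reflects {A B : Type} (ltA : A -> A -> Prop) (ltB : B -> B -> Prop)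
    (f : A -> B) :
  strict_linear ltA -> strict_linear ltB ->
  (forall x y, ltA x y -> ltB (f x) (f y)) ->
  (forall x y, ltA x y <-> ltB (f x) (f y)) /\ (forall x y, f x = f y -> x = y).
Proof.
  intros [_ [_ totA]] [irrB [trB _]] mono; split.
  - intros x y; split; [apply mono|intros Hf].
    destruct (totA x y) as [H|[H|H]]; [exact H|subst; destruct (irrB _ Hf)|].
    destruct (irrB _ (trB _ _ _ Hf (mono _ _ H))).
  - intros x y E.
    destruct (totA x y) as [H|[H|H]]; [|exact H|];
      apply mono in H; rewrite E in H; destruct (irrB _ H).
Qed.

Lemma no_max_dense {O : Type} {ltO : O -> O -> Prop} {g : O} :
  ~ (exists v, ltO v g /\ forall u, ltO u g -> ~ ltO v u) ->
  forall v, ltO v g -> exists u, ltO v u /\ ltO u g.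
Proof.
  intros Hnomax v hv; apply NNPP; intro Hn.
  apply Hnomax; exists v; split; [exact hv|].
  intros u hu hvu; apply Hn; exists u; split; assumption.
Qed.

Lemma countable_sig {A : Type} (P : A -> Prop) : countable A -> countable {x | P x}.
Proof.
  intros [f hf]; exists (fun x => f (proj1_sig x)).
  intros x y E; apply sig_eq, hf, E.
Qed.

Fixpoint list_code (l : list nat) : nat :=
  match l with
  | [] => 0
  | a :: l' => S (Cantor.to_nat (a, list_code l'))
  end.

Lemma list_code_inj (l m : list nat) : list_code l = list_code m -> l = m.
Proof.
  revert m; induction l as [|a l IH]; intros [|b m] E; try discriminate; [reflexivity|].
  apply PeanoNat.Nat.succ_inj, Cantor.to_nat_inj in E; injection E as -> E.
  f_equal; apply IH, E.
Qed.

Lemma countable_list {A : Type} : countable A -> countable (list A).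
Proof.
  intros [f hf]; exists (fun l => list_code (map f l)).
  intros l m E; apply list_code_inj in E; revert m E.
  induction l as [|a l IH]; intros [|b m] E; try discriminate; [reflexivity|].
  injection E as Eab E; f_equal; [apply hf, Eab|apply IH, E].
Qed.

Lemma finite_sig {A : Type} (F : A -> Prop) : finite_subset F -> finite_type {x | F x}.
Proof.
  intros [l hl].
  exists (flat_map (fun x => match excluded_middle_informative (F x) with
                             | left h => [exist _ x h]
                             | right _ => []
                             end) l).
  intros [x hx]; apply in_flat_map; exists x; split; [apply hl, hx|].
  destruct (excluded_middle_informative (F x)) as [h|h]; [|contradiction].
  left; apply sig_eq; reflexivity.
Qed.

Lemma finite_option {A : Type} : finite_type A -> finite_type (option A).
Proof.
  intros [l hl]; exists (None :: map Some l).
  intros [a|]; [right; apply in_map, hl|left; reflexivity].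
Qed.

Section Gaps.

Context {T : Type} (lt : T -> T -> Prop) (lt_linear : strict_linear lt).

Definition is_cut (F P : T -> Prop) : Prop :=
  (forall f, P f -> F f) /\ (forall f g, F f -> F g -> lt f g -> P g -> P f).

Definition gap (F P : T -> Prop) (t : T) : Prop :=
  ~ F t /\ forall f, F f -> (lt f t <-> P f).

Definition add_point (F : T -> Prop) (y t : T) : Prop := F t \/ t = y.

Lemma finite_add_point F y : finite_subset F -> finite_subset (add_point F y).
Proof.
  intros [l hl]; exists (y :: l).
  intros x [Hx|Hx]; [right; apply hl, Hx|left; symmetry; exact Hx].
Qed.

Lemma cut_restrict F P y : is_cut (add_point F y) P -> is_cut F (fun f => P f /\ F f).
Proof.
  intros [_ hdown]; split; [intros f [_ Hf]; exact Hf|].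
  intros f g Hf Hg Hfg [Pg _]; split; [|exact Hf].
  apply (hdown f g); [left; exact Hf|left; exact Hg|exact Hfg|exact Pg].
Qed.

Lemma cut_add_point_lower F P y : is_cut F P -> gap F P y -> is_cut (add_point F y) P.
Proof.
  destruct lt_linear as [irr [tr _]].
  intros [hsub hdown] [_ hy]; split; [intros f Pf; left; apply hsub, Pf|].
  intros f g [Hf| ->] Hg Hfg Pg; [|exfalso].
  - apply (hdown f g Hf (hsub g Pg) Hfg Pg).
  - apply (irr y), (tr _ g); [exact Hfg|apply hy; [apply hsub, Pg|exact Pg]].
Qed.

Lemma cut_add_point_upper F P y :
  is_cut F P -> gap F P y -> is_cut (add_point F y) (add_point P y).
Proof.
  destruct lt_linear as [irr [tr _]].
  intros [hsub hdown] [_ hy]; split.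
  - intros f [Pf| ->]; [left; apply hsub, Pf|right; reflexivity].
  - intros f g [Hf| ->] _ Hfg [Pg| ->].
    + left; apply (hdown f g Hf (hsub g Pg) Hfg Pg).
    + left; apply hy; assumption.
    + exfalso; apply (irr y), (tr _ g); [exact Hfg|apply hy; [apply hsub, Pg|exact Pg]].
    + destruct (irr _ Hfg).
Qed.

Lemma gap_add_point_lower F P P' y t :
  gap F P y -> (forall f, F f -> (P' f <-> P f)) -> ~ P' y ->
  gap (add_point F y) P' t <-> gap F P t /\ lt t y.
Proof.
  destruct lt_linear as [irr [tr tot]].
  intros [nFy hy] hagree nP'y; split.
  - intros [nF ht]; split.
    + split; [intro Ft; apply nF; left; exact Ft|].
      intros f Ff; rewrite <- hagree by exact Ff; apply ht; left; exact Ff.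
    + destruct (tot t y) as [H|[H|H]]; [exact H|exfalso; apply nF; right; exact H|].
      exfalso; apply nP'y, ht; [right; reflexivity|exact H].
  - intros [[nFt ht] lty]; split.
    + intros [Ft| ->]; [exact (nFt Ft)|exact (irr _ lty)].
    + intros f [Ff| ->]; [rewrite hagree by exact Ff; apply ht, Ff|].
      split; [intro H; destruct (irr _ (tr _ _ _ H lty))|intro H; contradiction].
Qed.

Lemma gap_add_point_upper F P P' y t :
  gap F P y -> (forall f, F f -> (P' f <-> P f)) -> P' y ->
  gap (add_point F y) P' t <-> gap F P t /\ lt y t.
Proof.
  destruct lt_linear as [irr [tr tot]].
  intros [nFy hy] hagree P'y; split.
  - intros [nF ht]; split.
    + split; [intro Ft; apply nF; left; exact Ft|].
      intros f Ff; rewrite <- hagree by exact Ff; apply ht; left; exact Ff.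
    + apply ht; [right; reflexivity|exact P'y].
  - intros [[nFt ht] ylt]; split.
    + intros [Ft| ->]; [exact (nFt Ft)|exact (irr _ ylt)].
    + intros f [Ff| ->]; [rewrite hagree by exact Ff; apply ht, Ff|].
      split; intros _; assumption.
Qed.

Lemma gap_add_point_shifted {F P P' y f0 t} :
  is_cut (add_point F y) P' -> gap F P y -> F f0 -> ~ (P' f0 <-> P f0) ->
  gap F (fun f => P' f /\ F f) t -> gap (add_point F y) P' t.
Proof.
  destruct lt_linear as [irr [tr tot]].
  intros [_ hdown] [nFy hy] Ff0 hshift [nFt ht].
  assert (t_ne_f0 : t <> f0) by (intros ->; exact (nFt Ff0)).
  assert (side : (lt y t <-> P' y) /\ t <> y).
  { destruct (classic (P f0)) as [Pf0|nPf0].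
    - assert (nP'f0 : ~ P' f0) by tauto.
      assert (f0y : lt f0 y) by (apply hy; assumption).
      assert (tf0 : lt t f0).
      { destruct (tot t f0) as [H|[H|H]]; [exact H|contradiction|].
        exfalso; apply nP'f0, (ht f0 Ff0), H. }
      assert (ty : lt t y) by exact (tr _ _ _ tf0 f0y).
      split; [split; intro H; exfalso|intros ->; exact (irr _ ty)].
      + exact (irr _ (tr _ _ _ H ty)).
      + apply nP'f0, (hdown f0 y); [left; exact Ff0|right; reflexivity|exact f0y|exact H].
    - assert (P'f0 : P' f0) by tauto.
      assert (yf0 : lt y f0).
      { destruct (tot y f0) as [H|[H|H]]; [exact H|subst; contradiction|].
        exfalso; apply nPf0, hy; assumption. }
      assert (f0t : lt f0 t) by (apply ht; [exact Ff0|split; assumption]).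
      assert (yt : lt y t) by exact (tr _ _ _ yf0 f0t).
      split; [split; intros _|intros ->; exact (irr _ yt)].
      + apply (hdown y f0); [right; reflexivity|left; exact Ff0|exact yf0|exact P'f0].
      + exact yt. }
  destruct side as [hyt t_ne_y]; split.
  - intros [Ft|Et]; [exact (nFt Ft)|exact (t_ne_y Et)].
  - intros f [Ff| ->]; [rewrite (ht f Ff); tauto|exact hyt].
Qed.

Lemma finite_empty : finite_subset (fun _ : T => False).
Proof. exists []; intros x []. Qed.

Lemma is_cut_empty : is_cut (fun _ => False) (fun _ => False).
Proof. split; [intros f []|intros f g []]. Qed.

Lemma gap_empty P t : gap (fun _ => False) P t.
Proof. split; [intros []|intros f []]. Qed.

Definition cut_ext_lt (F P : T -> Prop) (a b : option {x | F x}) : Prop :=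
  match a, b with
  | Some a, Some b => lt (proj1_sig a) (proj1_sig b)
  | Some a, None => P (proj1_sig a)
  | None, Some b => ~ P (proj1_sig b)
  | None, None => False
  end.

Lemma cut_ext_lt_linear F P : is_cut F P -> strict_linear (cut_ext_lt F P).
Proof.
  destruct lt_linear as [irr [tr tot]]; intros [_ hdown].
  split; [|split].
  - intros [a|]; [apply irr|intros []].
  - intros [a|] [b|] [c|]; simpl; intros H1 H2; try tauto.
    + exact (tr _ _ _ H1 H2).
    + exact (hdown _ _ (proj2_sig a) (proj2_sig b) H1 H2).
    + destruct (tot (proj1_sig a) (proj1_sig c)) as [H|[H|H]]; [exact H| |].
      * rewrite H in H1; contradiction.
      * exfalso; exact (H2 (hdown _ _ (proj2_sig c) (proj2_sig a) H H1)).
    + intro Pc; exact (H1 (hdown _ _ (proj2_sig b) (proj2_sig c) H2 Pc)).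
  - intros [a|] [b|]; simpl.
    + destruct (tot (proj1_sig a) (proj1_sig b)) as [H|[H|H]];
        [left; exact H|right; left; f_equal; apply sig_eq, H|right; right; exact H].
    + destruct (classic (P (proj1_sig a))); tauto.
    + destruct (classic (P (proj1_sig b))); tauto.
    + right; left; reflexivity.
Qed.

Lemma option_one_new (A : Type) :
  exists z : option A, (forall a, Some a <> z) /\ (forall y, (forall a, Some a <> y) -> y = z).
Proof.
  exists None; split; [discriminate|].
  intros [a|] H; [destruct (H a eq_refl)|reflexivity].
Qed.

Definition cut_ext (F P : T -> Prop) (hF : finite_subset F) (hP : is_cut F P) :
  prime_ext lt F :=
  @PrimeExt T lt F _ (cut_ext_lt F P) Some (cut_ext_lt_linear hP)
    (finite_option (finite_sig hF)) (fun a b => iff_refl _) (option_one_new _).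

Lemma realizes_cut_ext F P (hF : finite_subset F) (hP : is_cut F P) C :
  realizes (cut_ext hF hP) C -> exists y, gap F P y /\ C = add_point F y.
Proof.
  intros [_ [hFC [g [hgC [hgonto [hginj [hgord hgfix]]]]]]]; simpl in *.
  exists (g None); split; [split|].
  - intro Fy; apply (hginj (Some (exist _ _ Fy)) None) in hgfix; discriminate.
  - intros f Ff; rewrite <- (hgfix (exist _ f Ff)) at 1.
    symmetry; exact (hgord (Some (exist _ f Ff)) None).
  - apply functional_extensionality; intro c; apply propositional_extensionality.
    split.
    + intros Cc; destruct (hgonto c Cc) as [[a|] <-]; [left; rewrite hgfix; exact (proj2_sig a)|].
      right; reflexivity.
    + intros [Fc| ->]; [apply hFC, Fc|apply hgC].
Qed.

Section PrimeExtension.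

Context (F : T -> Prop) (B : prime_ext lt F).

Definition pe_new : pe_car B :=
  proj1_sig (constructive_indefinite_description _ (pe_one_new B)).

Lemma pe_new_spec :
  (forall a, pe_emb B a <> pe_new) /\ (forall b, (forall a, pe_emb B a <> b) -> b = pe_new).
Proof. exact (proj2_sig (constructive_indefinite_description _ (pe_one_new B))). Qed.

Lemma pe_car_cases b : b = pe_new \/ exists a, pe_emb B a = b.
Proof.
  destruct (classic (exists a, pe_emb B a = b)) as [H|H]; [right; exact H|left].
  apply pe_new_spec; intros a E; apply H; exists a; exact E.
Qed.

Lemma pe_emb_inj a a' : pe_emb B a = pe_emb B a' -> a = a'.
Proof.
  destruct lt_linear as [_ [_ tot]]; destruct (pe_linear B) as [birr _].
  intros E; apply sig_eq.
  destruct (tot (proj1_sig a) (proj1_sig a')) as [H|[H|H]]; [|exact H|];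
    apply (pe_emb_order B) in H; rewrite E in H; destruct (birr _ H).
Qed.

Definition pe_cut (f : T) : Prop :=
  exists h : F f, pe_lt B (pe_emb B (exist _ f h)) pe_new.

Lemma pe_cut_emb a : pe_cut (proj1_sig a) <-> pe_lt B (pe_emb B a) pe_new.
Proof.
  split; [intros [h H]; rewrite (sig_eq a (exist _ _ h)) by reflexivity; exact H|].
  intro H; exists (proj2_sig a); destruct a; exact H.
Qed.

Lemma pe_cut_is_cut : is_cut F pe_cut.
Proof.
  destruct (pe_linear B) as [_ [btr _]]; split; [intros f [h _]; exact h|].
  intros f g Ff Fg Hfg Pg.
  apply (pe_cut_emb (exist _ f Ff)), (btr _ (pe_emb B (exist _ g Fg)));
    [apply (pe_emb_order B), Hfg|apply (pe_cut_emb (exist _ g Fg)), Pg].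
Qed.

Definition pe_place (y : T) (b : pe_car B) : T :=
  match excluded_middle_informative (exists a, pe_emb B a = b) with
  | left H => proj1_sig (proj1_sig (constructive_indefinite_description _ H))
  | right _ => y
  end.

Lemma pe_place_emb y a : pe_place y (pe_emb B a) = proj1_sig a.
Proof.
  unfold pe_place; destruct (excluded_middle_informative _) as [H|H].
  - destruct (constructive_indefinite_description _ H) as [a' Ha']; simpl.
    rewrite (pe_emb_inj _ _ Ha'); reflexivity.
  - exfalso; apply H; exists a; reflexivity.
Qed.

Lemma pe_place_new y : pe_place y pe_new = y.
Proof.
  unfold pe_place; destruct (excluded_middle_informative _) as [[a H]|_]; [|reflexivity].
  destruct (proj1 pe_new_spec a H).
Qed.

Lemma pe_place_mono y b1 b2 :
  gap F pe_cut y -> pe_lt B b1 b2 -> lt (pe_place y b1) (pe_place y b2).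
Proof.
  destruct lt_linear as [_ [_ tot]]; destruct (pe_linear B) as [birr [btr _]].
  intros [nFy hy] H12.
  destruct (pe_car_cases b1) as [->|[a1 <-]]; destruct (pe_car_cases b2) as [->|[a2 <-]];
    rewrite ?pe_place_new, ?pe_place_emb.
  - destruct (birr _ H12).
  - assert (na2 : ~ lt (proj1_sig a2) y).
    { intro H; apply (birr pe_new), (btr _ (pe_emb B a2)); [exact H12|].
      apply pe_cut_emb, hy; [exact (proj2_sig a2)|exact H]. }
    destruct (tot y (proj1_sig a2)) as [H|[H|H]]; [exact H| |contradiction].
    exfalso; apply nFy; rewrite H; exact (proj2_sig a2).
  - apply hy; [exact (proj2_sig a1)|apply pe_cut_emb, H12].
  - apply (pe_emb_order B), H12.
Qed.

Lemma realizes_gap_point y :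
  finite_subset F -> gap F pe_cut y -> realizes B (add_point F y).
Proof.
  intros hF hy; split; [apply finite_add_point, hF|split; [intros x Fx; left; exact Fx|]].
  destruct (strict_mono_reflects (pe_place y) (pe_linear B) lt_linear
              (fun b1 b2 => pe_place_mono b1 b2 hy)) as [hord hinj].
  exists (pe_place y); repeat split.
  - intro b; destruct (pe_car_cases b) as [->|[a <-]].
    + right; apply pe_place_new.
    + left; rewrite pe_place_emb; exact (proj2_sig a).
  - intros c [Fc| ->].
    + exists (pe_emb B (exist _ c Fc)); apply pe_place_emb.
    + exists pe_new; apply pe_place_new.
  - exact hinj.
  - apply hord.
  - apply hord.
  - apply pe_place_emb.
Qed.

End PrimeExtension.

End Gaps.

Section Tree.

Context {W : Type} (ltW : W -> W -> Prop) (ltW_linear : strict_linear ltW).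

Fixpoint lex (l m : list W) : Prop :=
  match l, m with
  | [], [] => False
  | [], _ :: _ => True
  | _ :: _, [] => False
  | a :: l', b :: m' => ltW a b \/ (a = b /\ lex l' m')
  end.

Definition decreasing (l : list W) : Prop := Sorted (fun a b => ltW b a) l.

Definition dseq : Type := {l : list W | l <> [] /\ decreasing l}.

Definition dseq_lt (s t : dseq) : Prop := lex (proj1_sig s) (proj1_sig t).

Lemma lex_irrefl l : ~ lex l l.
Proof.
  destruct ltW_linear as [irr _].
  induction l as [|a l IH]; simpl; [tauto|].
  intros [H|[_ H]]; [exact (irr a H)|exact (IH H)].
Qed.

Lemma lex_trans l m n : lex l m -> lex m n -> lex l n.
Proof.
  destruct ltW_linear as [_ [tr _]].
  revert m n; induction l as [|a l IH]; intros [|b m] [|c n]; simpl; try tauto.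
  intros [H1|[<- H1]] [H2|[<- H2]]; [left; exact (tr _ _ _ H1 H2)|left; exact H1|left; exact H2|].
  right; split; [reflexivity|exact (IH _ _ H1 H2)].
Qed.

Lemma lex_total l m : lex l m \/ l = m \/ lex m l.
Proof.
  destruct ltW_linear as [_ [_ tot]].
  revert m; induction l as [|a l IH]; intros [|b m]; simpl; auto.
  destruct (tot a b) as [H|[<-|H]]; [left; left; exact H| |right; right; left; exact H].
  destruct (IH m) as [H|[<-|H]]; auto.
Qed.

Lemma dseq_lt_linear : strict_linear dseq_lt.
Proof.
  unfold dseq_lt; split; [|split].
  - intro s; apply lex_irrefl.
  - intros s t u; apply lex_trans.
  - intros s t; destruct (lex_total (proj1_sig s) (proj1_sig t)) as [H|[H|H]]; auto.
    right; left; apply sig_eq, H.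
Qed.

Lemma dseq_countable : countable W -> countable dseq.
Proof. intro hW; apply countable_sig, countable_list, hW. Qed.

Lemma ext_lt_linear : strict_linear (ext_lt ltW).
Proof.
  destruct ltW_linear as [irr [tr tot]]; split; [|split].
  - intros [a|[|]]; simpl; auto.
  - intros [a|[|]] [b|[|]] [c|[|]]; simpl; try tauto; apply tr.
  - intros [a|[|]] [b|[|]]; simpl; auto.
    destruct (tot a b) as [H|[->|H]]; auto.
Qed.

Lemma ext_lt_pred_le {d v g} :
  ext_lt ltW d g -> (forall u, ext_lt ltW u g -> ~ ext_lt ltW v u) -> d = v \/ ext_lt ltW d v.
Proof.
  destruct ext_lt_linear as [_ [_ tot]]; intros hdg hmax.
  destruct (tot d v) as [H|[H|H]]; [right; exact H|left; exact H|destruct (hmax d hdg H)].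
Qed.

Lemma ext_lt_below_top {v g} : ext_lt ltW v g -> g <> inr true -> exists m, v = inl m.
Proof.
  destruct v as [m|[|]]; [exists m; reflexivity| |];
    destruct g as [?|[|]]; simpl; try contradiction; congruence.
Qed.

Definition headed_below (g : W + bool) (l : list W) : Prop :=
  match l with [] => False | a :: _ => ext_lt ltW (inl a) g end.

Lemma headed_below_trans {g g' l} :
  headed_below g l -> ext_lt ltW g g' -> headed_below g' l.
Proof.
  destruct ext_lt_linear as [_ [tr _]].
  destruct l as [|a l]; [intros []|apply tr].
Qed.

Lemma decreasing_cons m l : headed_below (inl m) l -> decreasing l -> decreasing (m :: l).
Proof.
  intros hm hl; constructor; [exact hl|].
  destruct l as [|a l]; [constructor|constructor; exact hm].
Qed.

Lemma decreasing_tail {b l} :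
  decreasing (b :: l) -> l <> [] -> decreasing l /\ headed_below (inl b) l.
Proof.
  intros H hne; apply Sorted_inv in H as [hl hb]; split; [exact hl|].
  destruct l as [|a l]; [contradiction|exact (HdRel_inv hb)].
Qed.

Lemma dseq_single_valid m : [m] <> [] /\ decreasing [m].
Proof. split; [discriminate|repeat constructor]. Qed.

Definition dseq_single (m : W) : dseq := exist _ [m] (dseq_single_valid m).

Lemma dseq_cons_valid m (t : dseq) :
  headed_below (inl m) (proj1_sig t) -> m :: proj1_sig t <> [] /\ decreasing (m :: proj1_sig t).
Proof.
  intro hm; split; [discriminate|apply decreasing_cons; [exact hm|exact (proj2 (proj2_sig t))]].
Qed.

(* Only meaningful when the head of [t] is below [m]. *)
Definition dseq_cons (m : W) (t : dseq) : dseq :=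
  match excluded_middle_informative (headed_below (inl m) (proj1_sig t)) with
  | left hm => exist _ (m :: proj1_sig t) (dseq_cons_valid m t hm)
  | right _ => dseq_single m
  end.

Lemma dseq_cons_val m t :
  headed_below (inl m) (proj1_sig t) -> proj1_sig (dseq_cons m t) = m :: proj1_sig t.
Proof.
  intro hm; unfold dseq_cons.
  destruct (excluded_middle_informative _) as [h|H]; [reflexivity|contradiction].
Qed.

Section TreeEmbeddings.

Context {T : Type} (lt : T -> T -> Prop) (lt_linear : strict_linear lt).

Definition embeds_in_tree (R : T -> Prop) (d : W + bool) : Prop :=
  exists h : T -> list W,
    (forall x, R x -> (h x <> [] /\ decreasing (h x)) /\ headed_below d (h x)) /\
    (forall x y, R x -> R y -> lt x y -> lex (h x) (h y)).

Definition tree_embeds (g : W + bool) (R : T -> Prop) : Prop :=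
  exists e : dseq -> T,
    (forall s t, headed_below g (proj1_sig s) -> headed_below g (proj1_sig t) ->
       dseq_lt s t -> lt (e s) (e t)) /\
    (forall t, headed_below g (proj1_sig t) -> R (e t)).

Lemma embeds_in_tree_sub {R R' d} :
  embeds_in_tree R d -> (forall x, R' x -> R x) -> embeds_in_tree R' d.
Proof.
  intros [h [hR hmono]] hsub; exists h; split.
  - intros x Rx; apply hR, hsub, Rx.
  - intros x y Rx Ry; apply hmono; apply hsub; assumption.
Qed.

Lemma embeds_in_tree_raise {R d d'} :
  embeds_in_tree R d -> ext_lt ltW d d' -> embeds_in_tree R d'.
Proof.
  intros [h [hR hmono]] hdd'; exists h; split; [|exact hmono].
  intros x Rx; destruct (hR x Rx) as [hx hhead]; split; [exact hx|].
  exact (headed_below_trans hhead hdd').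
Qed.

(* Split at the head [b] of the image of [y]: either some [u] lies strictly between [b] and
   [v], bounding the heads below [y], or [v = b + 1], so that all points above [y] have
   head [b] and their tails lie below [b]. *)
Lemma embeds_in_tree_split {R v y} :
  embeds_in_tree R v -> R y ->
  exists u, ext_lt ltW u v /\
    (embeds_in_tree (fun x => R x /\ lt x y) u \/ embeds_in_tree (fun x => R x /\ lt y x) u).
Proof.
  destruct ltW_linear as [irr _]; destruct ext_lt_linear as [_ [etr _]].
  intros [h [hR hmono]] Ry.
  destruct (hR y Ry) as [[hne _] hhead].
  destruct (h y) as [|b l] eqn:Ey; [contradiction|]; simpl in hhead.
  destruct (classic (exists u, ext_lt ltW (inl b) u /\ ext_lt ltW u v))
    as [[u [hbu huv]]|Hnone].
  - exists u; split; [exact huv|left; exists h; split].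
    + intros x [Rx xy]; destruct (hR x Rx) as [hx _]; split; [exact hx|].
      pose proof (hmono x y Rx Ry xy) as Hl; rewrite Ey in Hl.
      destruct (h x) as [|a m]; [destruct (proj1 hx eq_refl)|].
      destruct Hl as [Hab|[-> _]]; [exact (etr (inl a) (inl b) u Hab hbu)|exact hbu].
    + intros x1 x2 [R1 _] [R2 _]; apply hmono; assumption.
  - exists (inl b); split; [exact hhead|right].
    assert (Hhead : forall x, R x -> lt y x -> exists t, h x = b :: t /\ lex l t).
    { intros x Rx yx; destruct (hR x Rx) as [_ hxv].
      pose proof (hmono y x Ry Rx yx) as Hl; rewrite Ey in Hl.
      destruct (h x) as [|a t]; [contradiction|].
      destruct Hl as [Hba|[<- Hl]]; [|exists t; split; [reflexivity|exact Hl]].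
      exfalso; apply Hnone; exists (inl a); split; [exact Hba|exact hxv]. }
    exists (fun x => tl (h x)); split.
    + intros x [Rx yx]; destruct (Hhead x Rx yx) as [t [Ex Hl]].
      destruct (hR x Rx) as [[_ hdec] _]; rewrite Ex in hdec |- *; simpl.
      assert (hnt : t <> []) by (intros ->; destruct l; contradiction).
      destruct (decreasing_tail hdec hnt) as [ht hbt]; split; [split|]; assumption.
    + intros x1 x2 [R1 y1] [R2 y2] H12.
      destruct (Hhead x1 R1 y1) as [t1 [E1 _]], (Hhead x2 R2 y2) as [t2 [E2 _]].
      pose proof (hmono x1 x2 R1 R2 H12) as Hl; rewrite E1, E2 in Hl |- *; simpl in *.
      destruct Hl as [Hbb|[_ Hl]]; [destruct (irr _ Hbb)|exact Hl].
Qed.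

Lemma tree_embeds_sub {g R R'} :
  tree_embeds g R -> (forall x, R x -> R' x) -> tree_embeds g R'.
Proof.
  intros [e [emono eR]] hsub; exists e; split; [exact emono|].
  intros t ht; apply hsub, eR, ht.
Qed.

Lemma tree_embeds_lower {g g' R} : tree_embeds g R -> ext_lt ltW g' g -> tree_embeds g' R.
Proof.
  intros [e [emono eR]] hg'g; exists e; split.
  - intros s t hs ht; apply emono; eapply headed_below_trans; eassumption.
  - intros t ht; apply eR; eapply headed_below_trans; eassumption.
Qed.

(* The point [y] is the image of the one-term sequence [[m]]: the sequences headed below
   [m] precede it, and the sequences [m :: t] follow it. *)
Lemma tree_embeds_split {g R m} :
  tree_embeds g R -> ext_lt ltW (inl m) g ->
  exists y, R y /\ tree_embeds (inl m) (fun t => R t /\ lt t y) /\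
                   tree_embeds (inl m) (fun t => R t /\ lt y t).
Proof.
  intros [e [emono eR]] hm.
  assert (hsingle : headed_below g (proj1_sig (dseq_single m))) by exact hm.
  assert (hcons : forall t, headed_below (inl m) (proj1_sig t) ->
                            headed_below g (proj1_sig (dseq_cons m t)))
    by (intros t ht; rewrite dseq_cons_val by exact ht; exact hm).
  exists (e (dseq_single m)); split; [apply eR, hsingle|split].
  - exists e; split.
    + intros s t hs ht; apply emono; eapply headed_below_trans; eassumption.
    + intros t ht; split; [apply eR; eapply headed_below_trans; eassumption|].
      apply emono; [eapply headed_below_trans; eassumption|exact hsingle|].
      unfold dseq_lt; simpl; destruct (proj1_sig t) as [|a l]; [contradiction|left; exact ht].
  - exists (fun t => e (dseq_cons m t)); split.
    + intros s t hs ht hst; apply emono; [apply hcons, hs|apply hcons, ht|].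
      unfold dseq_lt; rewrite !dseq_cons_val by assumption; simpl.
      right; split; [reflexivity|exact hst].
    + intros t ht; split; [apply eR, hcons, ht|].
      apply emono; [exact hsingle|apply hcons, ht|].
      unfold dseq_lt; rewrite dseq_cons_val by exact ht; simpl.
      right; split; [reflexivity|destruct (proj1_sig t); [contradiction|exact I]].
Qed.

Context (ltW_wf : well_founded ltW).

Theorem not_rkge_of_small_gap g : forall F P,
  finite_subset F -> is_cut lt F P ->
  (exists d, ext_lt ltW d g /\ embeds_in_tree (gap lt F P) d) ->
  ~ rkge lt (ext_lt_wf ltW_wf) g F.
Proof.
  induction g as [g IH] using (well_founded_ind (ext_lt_wf ltW_wf)).
  intros F P hF hP [d [hdg hemb]] Hrk; apply rkge_unfold in Hrk as [Hsucc Hlim].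
  destruct (classic (exists v, ext_lt ltW v g /\ forall u, ext_lt ltW u g -> ~ ext_lt ltW v u))
    as [[v [hvg hmax]]|Hnomax].
  - destruct (Hsucc v hvg hmax (cut_ext lt_linear hF hP)) as [C [HC HrkC]].
    destruct (realizes_cut_ext HC) as [y [hy ->]].
    assert (nPy : ~ P y) by (intro Py; apply (proj1 hy), (proj1 hP), Py).
    assert (hembv : embeds_in_tree (gap lt F P) v).
    { destruct (ext_lt_pred_le hdg hmax) as [<-|hdv]; [exact hemb|].
      exact (embeds_in_tree_raise hemb hdv). }
    destruct (embeds_in_tree_split hembv hy) as [u [huv [Hlow|Hup]]].
    + apply (IH v hvg (add_point F y) P (finite_add_point y hF)
               (cut_add_point_lower lt_linear hP hy)); [|exact HrkC].
      exists u; split; [exact huv|apply (embeds_in_tree_sub Hlow)].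
      intros t Ht; apply (gap_add_point_lower lt_linear P t hy) in Ht; [exact Ht| |exact nPy].
      intros f _; reflexivity.
    + apply (IH v hvg (add_point F y) (add_point P y) (finite_add_point y hF)
               (cut_add_point_upper lt_linear hP hy)); [|exact HrkC].
      exists u; split; [exact huv|apply (embeds_in_tree_sub Hup)].
      intros t Ht; apply (gap_add_point_upper lt_linear (add_point P y) t hy) in Ht;
        [exact Ht| |right; reflexivity].
      intros f Ff; split; [intros [Pf| ->]; [exact Pf|contradiction (proj1 hy)]|left; assumption].
  - destruct (no_max_dense Hnomax d hdg) as [u [hdu hug]].
    apply (IH u hug F P hF hP); [exists d; split; assumption|].
    exact (Hlim (no_max_dense Hnomax) u hug).
Qed.

Theorem rkge_of_large_gaps g : forall F,
  g <> inr true -> finite_subset F ->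
  (forall P, is_cut lt F P -> tree_embeds g (gap lt F P)) ->
  rkge lt (ext_lt_wf ltW_wf) g F.
Proof.
  induction g as [g IH] using (well_founded_ind (ext_lt_wf ltW_wf)).
  intros F hg hF Hgaps; apply rkge_unfold; split.
  - intros v hvg _ B.
    destruct (ext_lt_below_top hvg hg) as [m ->].
    set (P := pe_cut B).
    destruct (tree_embeds_split (Hgaps P (pe_cut_is_cut B)) hvg)
      as [y [hy [Hlow Hup]]].
    exists (add_point F y); split; [apply realizes_gap_point; assumption|].
    apply (IH (inl m) hvg); [discriminate|apply finite_add_point, hF|].
    intros P' hP'.
    destruct (classic (forall f, F f -> (P' f <-> P f))) as [Hagree|Hshift].
    + destruct (classic (P' y)) as [P'y|nP'y].
      * apply (tree_embeds_sub Hup); intros t Ht.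
        apply (gap_add_point_upper lt_linear P' t hy Hagree P'y), Ht.
      * apply (tree_embeds_sub Hlow); intros t Ht.
        apply (gap_add_point_lower lt_linear P' t hy Hagree nP'y), Ht.
    + apply not_all_ex_not in Hshift as [f0 Hf0]; apply imply_to_and in Hf0 as [Ff0 Hf0].
      apply (tree_embeds_sub (tree_embeds_lower (Hgaps _ (cut_restrict hP')) hvg)).
      intro t; apply (gap_add_point_shifted lt_linear hP' hy Ff0 Hf0).
  - intros _ v hvg; apply IH; [exact hvg| |exact hF|].
    + intros ->; destruct g as [?|[|]]; exact hvg.
    + intros P hP; exact (tree_embeds_lower (Hgaps P hP) hvg).
Qed.

End TreeEmbeddings.

Lemma dseq_embeds_in_tree : embeds_in_tree dseq_lt (fun _ => True) (inr false).
Proof.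
  exists (@proj1_sig _ _); split.
  - intros [[|a l] hvalid] _; split; [exact hvalid|destruct (proj1 hvalid eq_refl)|exact hvalid|exact I].
  - intros s t _ _ H; exact H.
Qed.

Lemma tree_embeds_dseq g : tree_embeds dseq_lt g (fun _ => True).
Proof. exists (fun t => t); split; [intros s t _ _ H; exact H|intros; exact I]. Qed.

End Tree.

Theorem corollary6p14 :
  forall (W : Type) (ltW : W -> W -> Prop)
    (hlin : strict_linear ltW) (hwf : well_founded ltW) (hc : countable W),
  exists (T : Type) (lt : T -> T -> Prop),
    strict_linear lt /\ countable T /\ rank_is lt hwf.
Proof.
  intros W ltW hlin hwf hc.
  pose proof (dseq_lt_linear hlin) as hdlin.
  exists (dseq ltW), (@dseq_lt W ltW); split; [exact hdlin|split; [exact (dseq_countable ltW hc)|]].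
  intro g; split.
  - intro Hrk; destruct g as [a|[|]]; [exact I| |exact I]; exfalso.
    refine (not_rkge_of_small_gap hlin hdlin hwf (inr true) finite_empty
              (is_cut_empty _) _ Hrk).
    exists (inr false); split; [exact I|].
    apply (embeds_in_tree_sub (dseq_embeds_in_tree ltW)); intros; exact I.
  - intro Hg; apply (rkge_of_large_gaps hlin hdlin hwf).
    + intros ->; exact Hg.
    + exact finite_empty.
    + intros P _; apply (tree_embeds_sub (tree_embeds_dseq ltW g)); intros t _.
      apply gap_empty.
Qed.
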